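(* Let $K$ be the Knaster–Kuratowski fan defined below. Then $K+S^1$ has non-empty interior.
   Context: Let $C=C_{1/3}-\tfrac12\subset[-\tfrac12,\tfrac12]$ be the translate of the middle-third Cantor set $C_{1/3}=\{\tfrac23\sum_{k\ge1}a_k3^{-(k-1)}:a_k\in\{0,1\}\}$. Let $E\subset C$ be the set of points of $C$ which are endpoints of deleted (removed) intervals, and $F=C\setminus E$. For $c\in C$ let $\ell_c=\{(x,cx):x\in[0,1]\}$. Put $K_E=\bigcup_{c\in E}\{(x,y)\in\ell_c:x\in\mathbb{Q}\}$, $K_F=\bigcup_{c\in F}\{(x,y)\in\ell_c:x\notin\mathbb{Q}\}$, and $K=K_E\cup K_F$. $S^1$ is the Euclidean unit circle and $X+Y=\{x+y:x\in X,y\in Y\}$. *)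

From Stdlib Require Import Reals QArith.
Open Scope R_scope.

(* Partial sums  sum_{k=1}^{n} 2 a_k 3^{-k}  (digits indexed from 0: a 0 = a_1). *)
Fixpoint cantor_psum (a : nat -> bool) (n : nat) : R :=
  match n with
  | O => 0
  | S m => cantor_psum a m + 2 * (if a m then 1 else 0) / 3 ^ (S m)
  end.

Definition C13 (x : R) : Prop :=
  exists a : nat -> bool, Un_cv (cantor_psum a) x.

Definition Cset (c : R) : Prop := C13 (c + 1/2).

(* The intervals deleted at step n+1 of the middle-third construction are
   (s + 3^{-(n+1)}, s + 2*3^{-(n+1)}) with s = cantor_psum a n;
   E = points of C that are endpoints of deleted intervals (translated by -1/2). *)
Definition Eset (c : R) : Prop :=
  Cset c /\
  exists (a : nat -> bool) (n : nat),
    c + 1/2 = cantor_psum a n + 1 / 3 ^ (S n) \/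
    c + 1/2 = cantor_psum a n + 2 / 3 ^ (S n).

Definition Fset (c : R) : Prop := Cset c /\ ~ Eset c.

Definition is_rational (x : R) : Prop := exists q : Q, x = Q2R q.

Definition KE (p : R * R) : Prop :=
  exists c, Eset c /\ 0 <= fst p <= 1 /\ snd p = c * fst p /\ is_rational (fst p).
Definition KF (p : R * R) : Prop :=
  exists c, Fset c /\ 0 <= fst p <= 1 /\ snd p = c * fst p /\ ~ is_rational (fst p).
Definition KK (p : R * R) : Prop := KE p \/ KF p.

Definition S1 (p : R * R) : Prop := fst p ^ 2 + snd p ^ 2 = 1.

Definition msum (X Y : R * R -> Prop) (p : R * R) : Prop :=
  exists u v, X u /\ Y v /\ p = (fst u + fst v, snd u + snd v).

Definition nonempty_interior (A : R * R -> Prop) : Prop :=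
  exists (p : R * R) (r : R), 0 < r /\
    forall q : R * R, (fst q - fst p) ^ 2 + (snd q - snd p) ^ 2 < r ^ 2 -> A q.

(* Every point p of the open disc of radius 1/2 about (-1/2, 0) has p1 < 0 and |p| < 1, so for
   every slope c the unit circle about p crosses the segment l_c at some abscissa x in (0, 1).
   Only countably many slopes are bad: the slopes in E (triadic rationals shifted by -1/2), and,
   for each rational x, the at most two slopes whose crossing point has abscissa x.  The Cantor
   set is not covered by any sequence, so some c in C is good; then c is in F, x is irrational,
   and p = (x, c x) + (p - (x, c x)) with (x, c x) in K_F and p - (x, c x) on the unit circle. *)
From Stdlib Require Import Reals QArith.
From Stdlib Require Import Lra Lia Cantor.
Open Scope R_scope.

Lemma pow3_pos n : 0 < 3 ^ n.
Proof. apply pow_lt; lra. Qed.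

Lemma Un_cv_le_tail (u : nat -> R) l N h :
  Un_cv u l -> (forall k, u (N + k)%nat <= h) -> l <= h.
Proof.
  intros Hcv Hle.
  apply Rle_cv_lim with (Un := fun k => u (k + N)%nat) (Vn := fun _ => h).
  - intro k; rewrite Nat.add_comm; apply Hle.
  - now apply CV_shift'.
  - intros e He; exists 0%nat; intros n _.
    unfold Rdist; rewrite Rminus_diag, Rabs_R0; exact He.
Qed.

Lemma cantor_psum_S_bounds a n :
  cantor_psum a n <= cantor_psum a (S n) <= cantor_psum a n + 2 / 3 ^ S n.
Proof.
  cbn [cantor_psum]; pose proof (pow3_pos (S n)) as H3.
  assert (0 < / 3 ^ S n) by (apply Rinv_0_lt_compat; exact H3).
  unfold Rdiv; destruct (a n); lra.
Qed.

Lemma cantor_psum_growing a : Un_growing (cantor_psum a).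
Proof. intro n; apply cantor_psum_S_bounds. Qed.

Lemma cantor_psum_tail a n m :
  cantor_psum a (n + m) <= cantor_psum a n + 1 / 3 ^ n - 1 / 3 ^ (n + m).
Proof.
  induction m as [|m IHm].
  - rewrite Nat.add_0_r; lra.
  - rewrite Nat.add_succ_r.
    pose proof (cantor_psum_S_bounds a (n + m)) as Hstep.
    pose proof (pow3_pos (n + m)).
    assert (2 / 3 ^ S (n + m) - 1 / 3 ^ (n + m) = - (1 / 3 ^ S (n + m)))
      by (simpl; field; lra).
    lra.
Qed.

Lemma cantor_psum_cv a : exists L, Un_cv (cantor_psum a) L.
Proof.
  destruct (growing_cv (cantor_psum a)) as [L HL].
  - apply cantor_psum_growing.
  - exists 1; intros x [n ->].
    pose proof (cantor_psum_tail a 0 n) as Htail; simpl in Htail.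
    pose proof (pow3_pos n).
    assert (0 < 1 / 3 ^ n) by (apply Rdiv_lt_0_compat; lra).
    lra.
  - now exists L.
Qed.

Lemma cantor_limit_between a L n : Un_cv (cantor_psum a) L ->
  cantor_psum a n <= L <= cantor_psum a n + 1 / 3 ^ n.
Proof.
  intro HL; split.
  - exact (growing_ineq _ _ (cantor_psum_growing a) HL n).
  - apply (Un_cv_le_tail _ _ n _ HL); intro k.
    pose proof (cantor_psum_tail a n k).
    pose proof (pow3_pos (n + k)).
    assert (0 < 1 / 3 ^ (n + k)) by (apply Rdiv_lt_0_compat; lra).
    lra.
Qed.

Lemma cantor_psum_triadic a n : exists N : nat, cantor_psum a n = INR N / 3 ^ n.
Proof.
  induction n as [|n [N HN]].
  - exists 0%nat; simpl; field.
  - exists (3 * N + 2 * (if a n then 1 else 0))%nat.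
    cbn [cantor_psum]; rewrite HN, plus_INR, !mult_INR.
    pose proof (pow3_pos n).
    destruct (a n); simpl INR; simpl pow; field; lra.
Qed.

Lemma Eset_triadic c : Eset c -> exists N k : nat, c = INR N / 3 ^ k - 1/2.
Proof.
  intros [_ [a [n Hn]]].
  destruct (cantor_psum_triadic a n) as [N HN].
  pose proof (pow3_pos n).
  destruct Hn as [Hc|Hc]; rewrite HN in Hc;
    [exists (3 * N + 1)%nat, (S n) | exists (3 * N + 2)%nat, (S n)];
    replace c with (c + 1/2 - 1/2) by ring; rewrite Hc, plus_INR, mult_INR;
    cbn [pow INR]; field; lra.
Qed.

Section AvoidSequence.

Variable b : nat -> R.

(* After n digits with partial sum s the limit lies in [s, s + 3^-n].  If b n is at most the
   middle s + 3^-(n+1), digit n = true moves the limit to the upper third, above b n; otherwise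
   digit n = false keeps it in the lower third, below b n. *)
Definition avoiding_digit (s : R) (n : nat) : bool :=
  if Rle_dec (b n) (s + 1 / 3 ^ S n) then true else false.

Fixpoint avoiding_psum (n : nat) : R :=
  match n with
  | O => 0
  | S m => avoiding_psum m
           + 2 * (if avoiding_digit (avoiding_psum m) m then 1 else 0) / 3 ^ S m
  end.

Definition avoiding_digits (n : nat) : bool := avoiding_digit (avoiding_psum n) n.

Lemma cantor_psum_avoiding_digits n : cantor_psum avoiding_digits n = avoiding_psum n.
Proof. induction n as [|n IHn]; simpl; [reflexivity|]; now rewrite IHn. Qed.

Lemma C13_avoids_sequence : exists x, C13 x /\ forall n, x <> b n.
Proof.
  destruct (cantor_psum_cv avoiding_digits) as [L HL].
  exists L; split; [now exists avoiding_digits|].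
  intros n Hn.
  pose proof (cantor_limit_between _ _ (S n) HL) as Hbetween.
  rewrite cantor_psum_avoiding_digits in Hbetween; cbn [avoiding_psum] in Hbetween.
  unfold avoiding_digit in Hbetween.
  pose proof (pow3_pos (S n)).
  assert (0 < / 3 ^ S n) by (apply Rinv_0_lt_compat; lra).
  unfold Rdiv in Hbetween.
  destruct (Rle_dec (b n) (avoiding_psum n + 1 * / 3 ^ S n)); lra.
Qed.

End AvoidSequence.

Definition countable (P : R -> Prop) : Prop :=
  exists b : nat -> R, forall x, P x -> exists n, x = b n.

Lemma countable_subset (P Q : R -> Prop) :
  (forall x, P x -> Q x) -> countable Q -> countable P.
Proof. intros HPQ [b Hb]; exists b; auto. Qed.

Lemma countable_union (P Q : R -> Prop) :
  countable P -> countable Q -> countable (fun x => P x \/ Q x).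
Proof.
  intros [bP HP] [bQ HQ].
  exists (fun k => let (i, m) := Cantor.of_nat k in
                   match i with O => bP m | S _ => bQ m end).
  intros x [Hx|Hx].
  - destruct (HP x Hx) as [m ->]; exists (Cantor.to_nat (0, m)%nat).
    now rewrite Cantor.cancel_of_to.
  - destruct (HQ x Hx) as [m ->]; exists (Cantor.to_nat (1, m)%nat).
    now rewrite Cantor.cancel_of_to.
Qed.

Lemma countable_range2 (f : nat -> nat -> R) :
  countable (fun x => exists m n, x = f m n).
Proof.
  exists (fun k => let (m, n) := Cantor.of_nat k in f m n).
  intros x [m [n ->]]; exists (Cantor.to_nat (m, n)).
  now rewrite Cantor.cancel_of_to.
Qed.

Definition Q_of_nat (k : nat) : Q :=
  let (m, d) := Cantor.of_nat k in
  let (i, j) := Cantor.of_nat m in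
  Qmake (Z.of_nat i - Z.of_nat j) (Pos.of_nat d).

Lemma Q_of_nat_surj (q : Q) : exists k, Q_of_nat k = q.
Proof.
  destruct q as [z d].
  exists (Cantor.to_nat (Cantor.to_nat (Z.to_nat z, Z.to_nat (- z)), Pos.to_nat d)).
  unfold Q_of_nat; rewrite !Cantor.cancel_of_to, Pos2Nat.id.
  f_equal; lia.
Qed.

Lemma countable_range_Q (g : Q -> R) : countable (fun x => exists q, x = g q).
Proof.
  exists (fun k => g (Q_of_nat k)).
  intros x [q ->]; destruct (Q_of_nat_surj q) as [k <-]; now exists k.
Qed.

Lemma countable_Eset : countable Eset.
Proof.
  apply (countable_subset _ _ Eset_triadic).
  apply (countable_range2 (fun N k => INR N / 3 ^ k - 1/2)).
Qed.

Definition rational_crossing_slope (p1 p2 c : R) : Prop :=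
  exists x, x <> 0 /\ is_rational x /\ (x - p1) ^ 2 + (c * x - p2) ^ 2 = 1.

Lemma slope_of_circle_point x p1 p2 c : x <> 0 ->
  (x - p1) ^ 2 + (c * x - p2) ^ 2 = 1 ->
  c = (p2 + sqrt (1 - (x - p1) ^ 2)) / x \/ c = (p2 - sqrt (1 - (x - p1) ^ 2)) / x.
Proof.
  intros Hx Hcirc.
  set (s := sqrt (1 - (x - p1) ^ 2)).
  assert (Hs : s * s = (c * x - p2) * (c * x - p2)).
  { unfold s; rewrite sqrt_sqrt; [lra|]. pose proof (pow2_ge_0 (c * x - p2)); lra. }
  assert (Hsplit : (c * x - p2 - s) * (c * x - p2 + s) = 0) by lra.
  destruct (Rmult_integral _ _ Hsplit); [left|right]; field_simplify_eq; lra.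
Qed.

Lemma countable_rational_crossing_slope p1 p2 :
  countable (rational_crossing_slope p1 p2).
Proof.
  set (slope (sign : R) (q : Q) := (p2 + sign * sqrt (1 - (Q2R q - p1) ^ 2)) / Q2R q).
  apply (countable_subset _ (fun c => (exists q, c = slope 1 q) \/ (exists q, c = slope (-1) q))).
  - intros c [x [Hx0 [[q ->] Hcirc]]].
    destruct (slope_of_circle_point _ _ _ _ Hx0 Hcirc) as [->| ->];
      [left|right]; exists q; unfold slope; f_equal; ring.
  - apply countable_union; apply countable_range_Q.
Qed.

Lemma Cset_avoids_countable (P : R -> Prop) : countable P -> exists c, Cset c /\ ~ P c.
Proof.
  intros [b Hb].
  destruct (C13_avoids_sequence (fun n => b n + 1/2)) as [x [Hx Hnb]].
  exists (x - 1/2); split.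
  - unfold Cset; now replace (x - 1/2 + 1/2) with x by ring.
  - intro HP; destruct (Hb _ HP) as [n Hn]; apply (Hnb n); lra.
Qed.

(* Intermediate values: (0, 0) lies inside the unit circle about p,
   and (1, c) outside it since p1 < 0. *)
Lemma line_meets_unit_circle p1 p2 c : p1 < 0 -> p1 ^ 2 + p2 ^ 2 < 1 ->
  exists x, 0 < x < 1 /\ (x - p1) ^ 2 + (c * x - p2) ^ 2 = 1.
Proof.
  intros Hp1 Hin.
  set (f x := (x - p1) ^ 2 + (c * x - p2) ^ 2 - 1).
  assert (Hf0 : f 0 < 0) by (unfold f; lra).
  assert (Hf1 : 0 < f 1) by (unfold f; pose proof (pow2_ge_0 (c * 1 - p2)); nra).
  destruct (IVT f 0 1) as [x [Hx Hfx]]; [unfold f; reg | lra | exact Hf0 | exact Hf1 |].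
  exists x; split.
  - split; apply Rnot_le_lt; intro; assert (x = 0 \/ x = 1) as [->| ->] by lra; lra.
  - unfold f in Hfx; lra.
Qed.

Theorem mainTheorem7 : nonempty_interior (msum KK S1).
Proof.
  exists (-1/2, 0), (1/2); split; [lra|].
  intros [p1 p2] Hp; simpl in Hp.
  assert (Hp1 : p1 < 0) by nra.
  assert (Hin : p1 ^ 2 + p2 ^ 2 < 1) by nra.
  destruct (Cset_avoids_countable (fun c => Eset c \/ rational_crossing_slope p1 p2 c))
    as [c [Hc Hgood]].
  { apply countable_union; [apply countable_Eset | apply countable_rational_crossing_slope]. }
  destruct (line_meets_unit_circle p1 p2 c Hp1 Hin) as [x [Hx Hcirc]].
  exists (x, c * x), (p1 - x, p2 - c * x); simpl; split; [|split].
  - right; exists c; simpl; repeat split; try lra.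
    + exact Hc.
    + intro HE; apply Hgood; now left.
    + intro Hq; apply Hgood; right; exists x; repeat split; auto; lra.
  - unfold S1; simpl; lra.
  - f_equal; ring.
Qed.
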